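(* Let $(X,\mu)$ and $(Y,\nu)$ be probability spaces and $R$ a measure on $X\times Y$. For $\phi\colon Y\to\mathbb{R}$ let $$\phi^+(x)=\ln\Big(\int_Y e^{\phi(y)}\,R(dx,dy)/\mu(dx)\Big)$$ (a Radon--Nikodym derivative, assumed well-defined). Let $F(\phi)=\int_X\phi^+\,d\mu$ and let $F^*$ be its convex conjugate. Let $\phi,\widetilde\phi\colon Y\to\mathbb{R}$ be two potentials. Set $$\pi(dx,dy)=e^{\phi(y)-\phi^+(x)}R(dx,dy),\qquad \widetilde\pi(dx,dy)=e^{\widetilde\phi(y)-\widetilde\phi^+(x)}R(dx,dy),$$ and let $\rho$ and $\widetilde\rho$ be their respective $Y$-marginals. Then $$F(\phi|\widetilde\phi)=F^*(\widetilde\rho|\rho)=H(\widetilde\pi|\pi),$$ where $H(\widetilde\pi|\pi)=\iint\ln(\widetilde\pi/\pi)\,d\widetilde\pi$.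
   Context: For a differentiable convex functional $G$, its Bregman divergence is $$G(a|b)=G(a)-G(b)-\langle G'(b),a-b\rangle,$$ where $G'$ is the derivative (first variation) and $\langle\cdot,\cdot\rangle$ is the pairing between functions and measures, $\langle\phi,\rho\rangle=\int\phi\,d\rho$. The convex conjugate is $F^*(\rho)=\sup_\phi\langle\phi,\rho\rangle-F(\phi)$. One has $F'(\phi)=\rho$ and $F'(\widetilde\phi)=\widetilde\rho$, and the $X$-marginals of $\pi$ and $\widetilde\pi$ are $\mu$. *)

From HB Require Import structures.
From mathcomp Require Import all_boot all_order all_algebra.
From mathcomp Require Import all_classical all_reals all_analysis.
Set Implicit Arguments. Unset Strict Implicit. Unset Printing Implicit Defensive.
Import Order.TTheory GRing.Theory Num.Theory.
Local Open Scope classical_set_scope.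
Local Open Scope ring_scope.
Local Open Scope ereal_scope.

Section defs.
Context {R : realType} {d1 d2 : measure_display}
  {X : measurableType d1} {Y : measurableType d2}.

(* [psip] is a version of psi^+ (x) = ln ( \int_Y e^{psi y} R(dx,dy) / mu(dx) ):
   e^{psip} is a Radon-Nikodym density of A |-> \int_{A x Y} e^{psi(y)} dR
   with respect to mu. *)
Definition is_plus (mu : {measure set X -> \bar R})
  (Rxy : {measure set (X * Y)%type -> \bar R}) (psi : Y -> R) (psip : X -> R) :=
  measurable_fun setT psip /\
  forall A, measurable A ->
    \int[Rxy]_(z in A `*` setT) (expR (psi z.2))%:E
    = \int[mu]_(x in A) (expR (psip x))%:E.

Definition Fpot (mu : {measure set X -> \bar R})
  (Rxy : {measure set (X * Y)%type -> \bar R}) (psi : Y -> R) : \bar R :=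
  match pselect (exists psip, is_plus mu Rxy psi psip) with
  | left h => \int[mu]_x (projT1 (cid h) x)%:E
  | right _ => +oo
  end.

Definition admissible (mu : {measure set X -> \bar R})
  (Rxy : {measure set (X * Y)%type -> \bar R})
  (rho : {measure set Y -> \bar R}) (psi : Y -> R) :=
  measurable_fun setT psi /\
  rho.-integrable setT (EFin \o psi) /\
  exists psip, is_plus mu Rxy psi psip /\ mu.-integrable setT (EFin \o psip).

Definition Fstar (mu : {measure set X -> \bar R})
  (Rxy : {measure set (X * Y)%type -> \bar R})
  (rho : {measure set Y -> \bar R}) : \bar R :=
  ereal_sup [set \int[rho]_y (psi y)%:E - Fpot mu Rxy psi
            | psi in admissible mu Rxy rho].
End defs.

Definition density_of {R : realType} {d} {T : measurableType d}
  (P Q : {measure set T -> \bar R}) (f : T -> R) :=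
  measurable_fun setT f /\ (forall z, (0 <= f z)%R) /\
  forall A, measurable A -> P A = \int[Q]_(z in A) (f z)%:E.

Definition relent {R : realType} {d} {T : measurableType d}
  (P Q : {measure set T -> \bar R}) : \bar R :=
  match pselect (exists f, density_of P Q f) with
  | left h => \int[P]_z (ln (projT1 (cid h) z))%:E
  | right _ => +oo
  end.

(* Write e_psi(x, y) = psi(y) - psi^+(x) (gibbs_exponent), so that
   pi = e^(e_phi) R.  The defining property of psi^+ says that e^(e_psi) R has
   X-marginal mu, hence e^(e_psi - e_phi) is a probability density with respect
   to pi.  As pi has marginals mu and rho,
     \int (e_psi - e_phi) dpi = (<psi, rho> - F psi) - (<phi, rho> - F phi),
   and the bound k <= e^k - 1 makes this nonpositive: the supremum defining
   F^*(rho) is attained at phi, i.e. F^*(rho) = <phi, rho> - F phi.  For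
   psi = phit the same density is d pit / d pi, so
     H(pit | pi) = \int (e_phit - e_phi) dpit
                 = (<phit, rhot> - F phit) - (<phi, rhot> - F phi)
   through the marginals mu and rhot of pit.  All three quantities of the
   theorem are thus one and the same combination of finite integrals. *)

From HB Require Import structures.
From mathcomp Require Import all_boot all_order all_algebra.
From mathcomp Require Import all_classical all_reals all_analysis.
From mathcomp Require Import measurable_realfun ring lra.
Set Implicit Arguments.
Unset Strict Implicit.
Unset Printing Implicit Defensive.
Import Order.TTheory GRing.Theory Num.Theory HBNNSimple.
Local Open Scope classical_set_scope.
Local Open Scope ring_scope.
Local Open Scope ereal_scope.

Section weighted_integral.
Context d d' (T : measurableType d) (T' : measurableType d') (R : realType).
Variables (m : {measure set T -> \bar R}) (q : T -> T') (w : T -> R).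
Hypotheses (mq : measurable_fun setT q) (mw : measurable_fun setT w)
  (w0 : forall z, (0 <= w z)%R).

Lemma integral_weighted_nnsfun (h : {nnsfun T' >-> R}) :
  \int[m]_z ((h (q z))%:E * (w z)%:E) =
  \sum_(y \in range h) y%:E * \int[m]_(z in q @^-1` (h @^-1` [set y])) (w z)%:E.
Proof.
have mqh y : measurable (q @^-1` (h @^-1` [set y])).
  by rewrite -[X in measurable X]setTI; apply: mq.
transitivity (\int[m]_z \sum_(y \in range h)
    ((y * \1_(q @^-1` (h @^-1` [set y])) z)%:E * (w z)%:E)).
  apply: eq_integral => z _; rewrite (fimfunE h (q z)) -fsumEFin //.
  by rewrite ge0_mule_fsuml // => y; exact: nnfun_muleindic_ge0.
rewrite ge0_integral_fsum //; last 2 first.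
- move=> y; apply: emeasurable_funM; apply/measurable_EFinP => //.
  exact: measurable_funM.
- move=> y z _; rewrite EFinM mule_ge0 ?lee_fin//.
  exact: (nnfun_muleindic_ge0 h y (q z)).
apply: eq_fsbigr => y /[!inE] -[t _ <-].
under eq_integral => z _ do rewrite EFinM -muleA.
rewrite ge0_integralZl ?lee_fin//.
- congr (_ * _); rewrite [RHS]integral_mkcond epatch_indic.
  by apply: eq_integral => z _; rewrite muleC.
- by apply: emeasurable_funM; apply/measurable_EFinP.
- by move=> z _; rewrite -EFinM lee_fin mulr_ge0.
Qed.

Lemma integral_weighted_approx (f : T' -> \bar R) (mf : measurable_fun setT f) :
  (forall x, 0 <= f x) ->
  \int[m]_z (f (q z) * (w z)%:E) =
  limn (fun n => \int[m]_z ((nnsfun_approx measurableT mf n (q z))%:E * (w z)%:E)).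
Proof.
move=> f0; rewrite -monotone_convergence//.
- apply: eq_integral => z _; apply/esym/cvg_lim => //; apply: cvgeZr => //.
  exact: cvg_nnsfun_approx.
- move=> n; apply: emeasurable_funM; apply/measurable_EFinP => //.
  exact: measurableT_comp.
- by move=> n z _; rewrite -EFinM lee_fin mulr_ge0.
- move=> z _ a b ab; rewrite lee_wpmul2r ?lee_fin //.
  exact/lefP/nd_nnsfun_approx.
Qed.

End weighted_integral.

Lemma ge0_integral_transfer d1 d2 (T1 : measurableType d1)
    (T2 : measurableType d2) (R : realType)
    (m1 : {measure set T1 -> \bar R}) (m2 : {measure set T2 -> \bar R})
    (p : T1 -> T2) (w1 : T1 -> R) (w2 : T2 -> R) :
  measurable_fun setT p -> measurable_fun setT w1 -> measurable_fun setT w2 ->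
  (forall z, 0 <= w1 z)%R -> (forall x, 0 <= w2 x)%R ->
  (forall A, measurable A ->
    \int[m1]_(z in p @^-1` A) (w1 z)%:E = \int[m2]_(x in A) (w2 x)%:E) ->
  forall f : T2 -> \bar R, measurable_fun setT f -> (forall x, 0 <= f x) ->
  \int[m1]_z (f (p z) * (w1 z)%:E) = \int[m2]_x (f x * (w2 x)%:E).
Proof.
move=> mp mw1 mw2 w10 w20 hA f mf f0.
rewrite (integral_weighted_approx m1 mp mw1 w10 mf f0).
rewrite (integral_weighted_approx m2 (@measurable_id _ _ setT) mw2 w20 mf f0).
congr (limn _); apply/funext => n; rewrite !integral_weighted_nnsfun//.
by apply: eq_fsbigr => y _; rewrite hA.
Qed.

Section image_measure.
Context d d' (S : measurableType d) (T : measurableType d') (R : realType).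
Variables (m : {measure set S -> \bar R}) (p : S -> T)
  (nu : {measure set T -> \bar R}).
Hypotheses (mp : measurable_fun setT p)
  (m_nu : forall A, measurable A -> m (p @^-1` A) = nu A).

Let integral_pushforward_image (f : T -> \bar R) :
  \int[pushforward m p]_x f x = \int[nu]_x f x.
Proof. by apply: eq_measure_integral => A mA _; exact: m_nu. Qed.

Lemma integrable_comp_image (g : T -> R) : nu.-integrable setT (EFin \o g) ->
  m.-integrable setT (fun z => (g (p z))%:E).
Proof.
move=> ig; have mg := measurable_int _ ig.
apply/integrableP; split; first exact: (measurableT_comp mg mp).
have := ge0_integral_pushforward mp m measurableT
  (measurableT_comp (@abse_measurable R setT) mg) (fun x _ => abse_ge0 (g x)%:E).
rewrite preimage_setT => <-.
by rewrite integral_pushforward_image; case/integrableP: ig.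
Qed.

Lemma integral_comp_image (g : T -> R) : nu.-integrable setT (EFin \o g) ->
  \int[m]_z (g (p z))%:E = \int[nu]_x (g x)%:E.
Proof.
move=> ig; rewrite -integral_pushforward_image integral_pushforward//.
- exact: measurable_int ig.
- by rewrite preimage_setT; exact: integrable_comp_image.
Qed.

End image_measure.

Lemma integrable_integralEFin d (T : measurableType d) (R : realType)
    (m : {measure set T -> \bar R}) (f : T -> \bar R) :
  m.-integrable setT f -> exists r : R, \int[m]_x f x = r%:E.
Proof.
move=> /(integrable_fin_num measurableT) fin_int.
by exists (fine (\int[m]_x f x)); rewrite fineK.
Qed.

Section is_plus.
Context (R : realType) d1 d2 (X : measurableType d1) (Y : measurableType d2).

Definition gibbs_exponent (psi : Y -> R) (psip : X -> R) (z : X * Y) : R :=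
  (psi z.2 - psip z.1)%R.

Lemma measurable_gibbs_exponent psi psip :
  measurable_fun setT psi -> measurable_fun setT psip ->
  measurable_fun setT (gibbs_exponent psi psip).
Proof.
move=> mpsi mpsip; apply: measurable_funB.
- exact: measurableT_comp mpsi measurable_snd.
- exact: measurableT_comp mpsip measurable_fst.
Qed.

Variables (mu : {measure set X -> \bar R})
  (Rxy : {measure set (X * Y)%type -> \bar R}).

Lemma is_plus_integral psi psip (g : X -> \bar R) :
  measurable_fun setT psi -> is_plus mu Rxy psi psip ->
  measurable_fun setT g -> (forall x, 0 <= g x) ->
  \int[Rxy]_z (g z.1 * (expR (gibbs_exponent psi psip z))%:E) = \int[mu]_x g x.
Proof.
move=> mpsi [mpsip hp] mg g0.
transitivity (\int[Rxy]_z (g z.1 * (expR (- psip z.1))%:E * (expR (psi z.2))%:E)).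
  by apply: eq_integral => z _; rewrite -muleA -EFinM -expRD addrC.
rewrite (@ge0_integral_transfer _ _ _ _ _ Rxy mu fst (fun z => expR (psi z.2))
  (fun x => expR (psip x)) _ _ _ _ _ _ (fun x => g x * (expR (- psip x))%:E)) //.
- apply: eq_integral => x _.
  by rewrite -muleA -EFinM -expRD addNr expR0 mule1.
- by apply: measurableT_comp => //; exact: measurableT_comp mpsi measurable_snd.
- exact: measurableT_comp.
- by move=> A mA; rewrite -setXT hp.
- apply: emeasurable_funM => //; apply/measurable_EFinP.
  by apply: measurableT_comp => //; exact: measurableT_comp.
- by move=> x; rewrite mule_ge0 ?lee_fin ?expR_ge0.
Qed.

End is_plus.

Lemma relent_density d (T : measurableType d) (R : realType)
    (P Q : {measure set T -> \bar R}) (f : T -> R) :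
  density_of P Q f -> P setT < +oo -> relent P Q = \int[P]_z (ln (f z))%:E.
Proof.
move=> [mf [f0 Pf]] PT; rewrite /relent; case: pselect => [h|]; last first.
  by case; exists f.
case: cid => g [mg [g0 Pg]] /=.
have PQ : P `<< Q.
  apply/null_content_dominatesP => A mA QA; rewrite Pf //.
  by apply: null_set_integral => //; apply/measurable_EFinP; exact: measurable_funTS.
have intf : Q.-integrable setT (EFin \o f).
  apply/integrableP; split; first exact/measurable_EFinP.
  by under eq_integral do rewrite /= ger0_norm//; rewrite -Pf.
have /(null_dominates_ae_eq measurableT PQ) fg : ae_eq Q setT (EFin \o f) (EFin \o g).
  apply: integral_ae_eq => //; first exact/measurable_EFinP.
  by move=> E _ mE; rewrite -Pf // Pg.
apply: ae_eq_integral => //.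
- by apply/measurable_EFinP; exact: measurableT_comp (@measurable_ln R) mg.
- by apply/measurable_EFinP; exact: measurableT_comp (@measurable_ln R) mf.
by apply: filterS fg => z + Tz => /(_ Tz) [->].
Qed.

Section gibbs_exponent_integral.
Context (R : realType) d1 d2 (X : measurableType d1) (Y : measurableType d2).
Variables (mu : {measure set X -> \bar R}) (rho : {measure set Y -> \bar R})
  (P : {measure set (X * Y)%type -> \bar R}).
Hypotheses (P_fst : forall A, measurable A -> P (A `*` setT) = mu A)
  (P_snd : forall B, measurable B -> rho B = P (setT `*` B)).

Let P_fst_preimage (A : set X) : measurable A -> P (fst @^-1` A) = mu A.
Proof. by move=> mA; rewrite -setXT P_fst. Qed.

Let P_snd_preimage (B : set Y) : measurable B -> P (snd @^-1` B) = rho B.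
Proof. by move=> mB; rewrite -setTX P_snd. Qed.

Lemma integrable_gibbs_exponent psi psip :
  rho.-integrable setT (EFin \o psi) -> mu.-integrable setT (EFin \o psip) ->
  P.-integrable setT (EFin \o gibbs_exponent psi psip).
Proof.
move=> ipsi ipsip.
have ipsiB : P.-integrable setT (fun z => (psi z.2)%:E - (psip z.1)%:E).
  apply: integrableB => //.
  - exact: (integrable_comp_image measurable_snd P_snd_preimage ipsi).
  - exact: (integrable_comp_image measurable_fst P_fst_preimage ipsip).
apply: (eq_integrable measurableT _ _ _ ipsiB) => z _.
by rewrite /= /gibbs_exponent EFinB.
Qed.

Lemma integral_gibbs_exponent psi psip :
  rho.-integrable setT (EFin \o psi) -> mu.-integrable setT (EFin \o psip) ->
  \int[P]_z (gibbs_exponent psi psip z)%:E =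
  \int[rho]_y (psi y)%:E - \int[mu]_x (psip x)%:E.
Proof.
move=> ipsi ipsip.
transitivity (\int[P]_z ((psi z.2)%:E - (psip z.1)%:E)).
  by apply: eq_integral => z _; rewrite /gibbs_exponent EFinB.
rewrite integralB_EFin //.
- by rewrite (integral_comp_image measurable_snd P_snd_preimage ipsi)
    (integral_comp_image measurable_fst P_fst_preimage ipsip).
- exact: (integrable_comp_image measurable_snd P_snd_preimage ipsi).
- exact: (integrable_comp_image measurable_fst P_fst_preimage ipsip).
Qed.

End gibbs_exponent_integral.

Section gibbs.
Context (R : realType) d1 d2 (X : measurableType d1) (Y : measurableType d2).
Variables (mu : probability X R) (Rxy : {measure set (X * Y)%type -> \bar R}).

Lemma is_plus_ae_eq psi psip q : measurable_fun setT psi ->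
  is_plus mu Rxy psi psip -> is_plus mu Rxy psi q ->
  ae_eq mu setT (EFin \o psip) (EFin \o q).
Proof.
move=> mpsi hpsip hq; have mpsip := hpsip.1; have mq := hq.1.
(* Compare e^(q - psip) with the mu-integrable constant 1 rather than e^q with
   e^psip, which need not be mu-integrable. *)
have : ae_eq mu setT (fun=> 1%:E) (fun x => (expR (q x - psip x))%:E).
  apply: integral_ae_eq => //.
  - exact: finite_measure_integrable_cst.
  - by apply/measurable_EFinP; apply: measurableT_comp => //; exact: measurable_funB.
  move=> E _ mE; pose g x := (\1_E x * expR (q x - psip x))%:E.
  have mg : measurable_fun setT g.
    apply/measurable_EFinP; apply: measurable_funM; first exact: measurable_indic.
    by apply: measurableT_comp => //; exact: measurable_funB.
  have g0 x : 0 <= g x by rewrite lee_fin mulr_ge0 ?expR_ge0.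
  rewrite integral_cst // mul1e.
  transitivity (\int[Rxy]_z ((\1_E z.1)%:E * (expR (gibbs_exponent psi psip z))%:E)).
    rewrite (@is_plus_integral _ _ _ _ _ mu Rxy psi psip (EFin \o \1_E)) //.
    - by rewrite integral_indic // setIT.
    - exact/measurable_EFinP/measurable_indic.
    - by move=> x; rewrite lee_fin indicE.
  transitivity (\int[Rxy]_z (g z.1 * (expR (gibbs_exponent psi q z))%:E)).
    apply: eq_integral => z _; rewrite /g -!EFinM -mulrA -expRD.
    by congr (EFin (_ * expR _)%R); rewrite /gibbs_exponent; ring.
  rewrite (@is_plus_integral _ _ _ _ _ mu Rxy psi q g) // [RHS]integral_mkcond.
  by rewrite epatch_indic; apply: eq_integral => x _; rewrite /g EFinM muleC.
apply: filterS => x + Tx => /(_ Tx) /esym [] /(congr1 (@ln R)).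
by rewrite expRK ln1 => /eqP; rewrite subr_eq0 => /eqP qE; rewrite /= qE.
Qed.

Lemma Fpot_is_plus psi psip : measurable_fun setT psi ->
  is_plus mu Rxy psi psip -> Fpot mu Rxy psi = \int[mu]_x (psip x)%:E.
Proof.
move=> mpsi hpsip; rewrite /Fpot; case: pselect => [h|]; last by case; exists psip.
case: cid => q hq /=; apply: ae_eq_integral => //.
- by apply/measurable_EFinP; exact: hq.1.
- by apply/measurable_EFinP; exact: hpsip.1.
- exact: is_plus_ae_eq hq hpsip.
Qed.

Section gibbs_measure.
Variables (phi : Y -> R) (phip : X -> R) (pi : {measure set (X * Y)%type -> \bar R}).
Hypotheses (mphi : measurable_fun setT phi) (hphip : is_plus mu Rxy phi phip).
Hypothesis pi_def : forall A, measurable A ->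
  pi A = \int[Rxy]_(z in A) (expR (gibbs_exponent phi phip z))%:E.

Let mphip : measurable_fun setT phip := hphip.1.

Lemma gibbs_integral (g : X * Y -> \bar R) : measurable_fun setT g ->
  (forall z, 0 <= g z) ->
  \int[pi]_z g z = \int[Rxy]_z (g z * (expR (gibbs_exponent phi phip z))%:E).
Proof.
move=> mg g0.
rewrite (@ge0_integral_transfer _ _ _ _ _ Rxy pi id _ (fun=> 1%R) _ _ _ _ _ _ g) //.
- by apply: eq_integral => z _; rewrite mule1.
- by apply: measurableT_comp => //; exact: measurable_gibbs_exponent.
- by move=> A mA; rewrite integral_cst // mul1e -pi_def.
Qed.

Lemma gibbs_fst_marginal A : measurable A -> pi (A `*` setT) = mu A.
Proof.
move=> mA; rewrite pi_def; last exact: measurableX.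
rewrite setXT integral_mkcond epatch_indic.
transitivity (\int[Rxy]_z ((\1_A z.1)%:E * (expR (gibbs_exponent phi phip z))%:E)).
  by apply: eq_integral => z _; rewrite /= muleC.
rewrite (@is_plus_integral _ _ _ _ _ mu Rxy phi phip (EFin \o \1_A)) //.
- by rewrite integral_indic // setIT.
- exact/measurable_EFinP/measurable_indic.
- by move=> x; rewrite lee_fin indicE.
Qed.

Lemma gibbs_setT : pi setT = 1.
Proof. by rewrite -setXTT gibbs_fst_marginal //; exact: probability_setT. Qed.

Lemma integral_gibbs_exp_ratio psi psip : measurable_fun setT psi ->
  is_plus mu Rxy psi psip ->
  \int[pi]_z (expR (gibbs_exponent psi psip z - gibbs_exponent phi phip z))%:E = 1.
Proof.
move=> mpsi hpsip; have mpsip := hpsip.1.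
rewrite gibbs_integral; last 2 first.
- apply/measurable_EFinP; apply: measurableT_comp => //.
  by apply: measurable_funB; exact: measurable_gibbs_exponent.
- by move=> z; rewrite lee_fin expR_ge0.
transitivity (\int[Rxy]_z (cst 1 z.1 * (expR (gibbs_exponent psi psip z))%:E)).
  by apply: eq_integral => z _; rewrite mul1e -EFinM -expRD subrK.
rewrite (@is_plus_integral _ _ _ _ _ mu Rxy psi psip (cst 1)) //.
by rewrite integral_cst // mul1e; exact: probability_setT.
Qed.

Lemma gibbs_density_of psi psip (pi' : {measure set (X * Y)%type -> \bar R}) :
  measurable_fun setT psi -> measurable_fun setT psip ->
  (forall A, measurable A ->
    pi' A = \int[Rxy]_(z in A) (expR (gibbs_exponent psi psip z))%:E) ->
  density_of pi' pi
    (fun z => expR (gibbs_exponent psi psip z - gibbs_exponent phi phip z)).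
Proof.
move=> mpsi mpsip pi'_def; split; last split.
- apply: measurableT_comp => //.
  by apply: measurable_funB; exact: measurable_gibbs_exponent.
- by move=> z; exact: expR_ge0.
move=> A mA; rewrite pi'_def // [LHS]integral_mkcond [RHS]integral_mkcond.
rewrite !epatch_indic gibbs_integral; last 2 first.
- apply: emeasurable_funM; apply/measurable_EFinP; last exact: measurable_indic.
  apply: measurableT_comp => //.
  by apply: measurable_funB; exact: measurable_gibbs_exponent.
- by move=> z; rewrite /= -EFinM lee_fin mulr_ge0 ?expR_ge0 // indicE.
apply: eq_integral => z _ /=; rewrite -!EFinM; congr EFin.
by rewrite mulrAC -expRD subrK.
Qed.

Variables (rho : {measure set Y -> \bar R}).
Hypothesis rho_def : forall B, measurable B -> rho B = pi (setT `*` B).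

Lemma gibbs_variational psi : admissible mu Rxy rho psi ->
  rho.-integrable setT (EFin \o phi) -> mu.-integrable setT (EFin \o phip) ->
  \int[rho]_y (psi y)%:E - Fpot mu Rxy psi <=
  \int[rho]_y (phi y)%:E - \int[mu]_x (phip x)%:E.
Proof.
move=> [mpsi [ipsi [psip [hpsip ipsip]]]] iphi iphip.
have mpsip := hpsip.1.
rewrite (Fpot_is_plus mpsi hpsip) -sube_le0.
pose k z := (gibbs_exponent psi psip z - gibbs_exponent phi phip z)%R.
have ipsi_e := integrable_gibbs_exponent gibbs_fst_marginal rho_def ipsi ipsip.
have iphi_e := integrable_gibbs_exponent gibbs_fst_marginal rho_def iphi iphip.
have ik : pi.-integrable setT (EFin \o k).
  apply: (eq_integrable measurableT _ _ _ (integrableB measurableT ipsi_e iphi_e)).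
  by move=> z _; rewrite /= /k EFinB.
have iek : pi.-integrable setT (fun z => (expR (k z))%:E).
  apply/integrableP; split.
    apply/measurable_EFinP; apply: measurableT_comp => //.
    by apply: measurable_funB; exact: measurable_gibbs_exponent.
  under eq_integral do rewrite /= ger0_norm ?expR_ge0 //.
  by rewrite integral_gibbs_exp_ratio // ltry.
have i1 : pi.-integrable setT (fun=> 1%:E).
  apply/integrableP; split => //.
  under eq_integral do rewrite /= normr1.
  by rewrite integral_cst // mul1e gibbs_setT ltry.
have -> : \int[rho]_y (psi y)%:E - \int[mu]_x (psip x)%:E
    - (\int[rho]_y (phi y)%:E - \int[mu]_x (phip x)%:E) = \int[pi]_z (k z)%:E.
  rewrite -!(integral_gibbs_exponent gibbs_fst_marginal rho_def) //.
  rewrite -integralB_EFin //; apply: eq_integral => z _; exact/esym/EFinB.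
have <- : \int[pi]_z ((expR (k z))%:E - 1%:E) = 0.
  rewrite integralB // integral_gibbs_exp_ratio // integral_cst //.
  by rewrite gibbs_setT mul1e subee.
apply: le_integral => //; first exact: integrableB.
by move=> z _; rewrite /= -EFinB lee_fin; have := expR_ge1Dx (k z); lra.
Qed.

Lemma Fstar_gibbs : rho.-integrable setT (EFin \o phi) ->
  mu.-integrable setT (EFin \o phip) ->
  Fstar mu Rxy rho = \int[rho]_y (phi y)%:E - \int[mu]_x (phip x)%:E.
Proof.
move=> iphi iphip; apply/eqP; rewrite eq_le; apply/andP; split.
- by apply: ge_ereal_sup => _ [psi hpsi <-]; exact: gibbs_variational.
- apply: ereal_sup_ubound; exists phi; last by rewrite (Fpot_is_plus mphi hphip).
  by split => //; split => //; exists phip.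
Qed.

End gibbs_measure.

Lemma relent_gibbs (phi phit : Y -> R) (phip phitp : X -> R)
    (pi pit : {measure set (X * Y)%type -> \bar R})
    (rhot : {measure set Y -> \bar R}) :
  measurable_fun setT phi -> measurable_fun setT phit ->
  is_plus mu Rxy phi phip -> is_plus mu Rxy phit phitp ->
  (forall A, measurable A ->
     pi A = \int[Rxy]_(z in A) (expR (gibbs_exponent phi phip z))%:E) ->
  (forall A, measurable A ->
     pit A = \int[Rxy]_(z in A) (expR (gibbs_exponent phit phitp z))%:E) ->
  (forall B, measurable B -> rhot B = pit (setT `*` B)) ->
  mu.-integrable setT (EFin \o phip) -> mu.-integrable setT (EFin \o phitp) ->
  rhot.-integrable setT (EFin \o phi) -> rhot.-integrable setT (EFin \o phit) ->
  relent pit pi = (\int[rhot]_y (phit y)%:E - \int[mu]_x (phitp x)%:E)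
                  - (\int[rhot]_y (phi y)%:E - \int[mu]_x (phip x)%:E).
Proof.
move=> mphi mphit hphip hphitp pi_def pit_def rhot_def iphip iphitp iphi iphit.
have pit_fst := gibbs_fst_marginal mphit hphitp pit_def.
rewrite (relent_density (gibbs_density_of mphi hphip pi_def mphit hphitp.1 pit_def));
  last by rewrite (gibbs_setT mphit hphitp pit_def) ltry.
rewrite -!(integral_gibbs_exponent pit_fst rhot_def) // -integralB_EFin //.
- by apply: eq_integral => z _; rewrite expRK EFinB.
- exact: (integrable_gibbs_exponent pit_fst rhot_def).
- exact: (integrable_gibbs_exponent pit_fst rhot_def).
Qed.

End gibbs.

Theorem lemma3p5 (R : realType) (d1 d2 : measure_display)
  (X : measurableType d1) (Y : measurableType d2)
  (mu : probability X R) (nu : probability Y R)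
  (Rxy : {measure set (X * Y)%type -> \bar R})
  (phi phit : Y -> R) (phip phitp : X -> R)
  (pi pit : {measure set (X * Y)%type -> \bar R})
  (rho rhot : {measure set Y -> \bar R}) :
  measurable_fun setT phi -> measurable_fun setT phit ->
  is_plus mu Rxy phi phip -> is_plus mu Rxy phit phitp ->
  mu.-integrable setT (EFin \o phip) -> mu.-integrable setT (EFin \o phitp) ->
  (forall A, measurable A ->
     pi A = \int[Rxy]_(z in A) (expR (phi z.2 - phip z.1))%:E) ->
  (forall A, measurable A ->
     pit A = \int[Rxy]_(z in A) (expR (phit z.2 - phitp z.1))%:E) ->
  (forall B, measurable B -> rho B = pi (setT `*` B)) ->
  (forall B, measurable B -> rhot B = pit (setT `*` B)) ->
  rho.-integrable setT (EFin \o phi) -> rho.-integrable setT (EFin \o phit) ->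
  rhot.-integrable setT (EFin \o phi) -> rhot.-integrable setT (EFin \o phit) ->
  let Fbreg := Fpot mu Rxy phi - Fpot mu Rxy phit
               - \int[rhot]_y (phi y - phit y)%:E in
  let Fstarbreg := Fstar mu Rxy rhot - Fstar mu Rxy rho
               - (\int[rhot]_y (phi y)%:E - \int[rho]_y (phi y)%:E) in
  Fbreg = Fstarbreg /\ Fstarbreg = relent pit pi.
Proof.
move=> mphi mphit hphip hphitp iphip iphitp pi_def pit_def rho_def rhot_def
  rphi _ rtphi rtphit Fbreg Fstarbreg.
rewrite /Fstarbreg /Fbreg (Fpot_is_plus mphi hphip) (Fpot_is_plus mphit hphitp).
rewrite (Fstar_gibbs mphi hphip pi_def rho_def rphi iphip).
rewrite (Fstar_gibbs mphit hphitp pit_def rhot_def rtphit iphitp).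
rewrite (relent_gibbs mphi mphit hphip hphitp pi_def pit_def rhot_def iphip iphitp
  rtphi rtphit).
under eq_integral do rewrite EFinB.
rewrite integralB_EFin //.
have [a ->] := integrable_integralEFin rphi.
have [b ->] := integrable_integralEFin rtphi.
have [c ->] := integrable_integralEFin rtphit.
have [e ->] := integrable_integralEFin iphip.
have [f ->] := integrable_integralEFin iphitp.
by rewrite -!EFinB; split; congr EFin; lra.
Qed.
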